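(* Let $\overrightarrow{C}=\bigcup_{j=1}^t m_j\overrightarrow{C_{n_j}}$ be an oriented 2-regular graph with at least two cycle components, where $n_1<n_2<\dots<n_t$ are the distinct cycle lengths, $m_j\ge1$ is the number of components of length $n_j$, and $\sum_j m_j\ge2$. Let $2\le k\le n_1-1$ be such that $\{k\}$ is a distance set of $\overrightarrow{C}$. Then $\overrightarrow{C}$ is $\{k\}$-antimagic if and only if it is unidirectional.
   Context: An oriented graph is a simple graph each of whose edges is given one direction (an arc $(u,v)$ goes from $u$ to $v$). For vertices $u,v$, $d(u,v)$ is the length of a shortest directed path from $u$ to $v$ ($d(u,u)=0$, $\infty$ if no path). A distance set of an oriented graph is a nonempty set $D$ of nonnegative integers each of which is a finite distance $d(u,v)$ for some pair of vertices. $N_D(v)=\{y : d(v,y)\in D\}$; for a bijection $f:V\to\{1,\dots,|V|\}$, $\omega_D(v)=\sum_{x\in N_D(v)}f(x)$ (empty sum $0$); $f$ is $D$-antimagic if distinct vertices have distinct $D$-weights, and the graph is $D$-antimagic if such an $f$ exists. An oriented 2-regular graph is an orientation of a disjoint union of cycles, each of length at least $3$. A cycle component on $v_1,\dots,v_n$ is unidirectional if (up to relabeling) its arcs are $(v_i,v_{i+1})$, $1\le i\le n-1$, and $(v_n,v_1)$; the oriented 2-regular graph is unidirectional if every cycle component is unidirectional. *)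

From mathcomp Require Import all_boot.
Set Implicit Arguments. Unset Strict Implicit. Unset Printing Implicit Defensive.

Section OrientedGraphs.
Variable V : finType.
Variable a : rel V.  (* arc relation: a u v means the arc (u,v) *)

Definition oriented : Prop :=
  (forall x, ~~ a x x) /\ (forall x y, a x y -> ~~ a y x).

Definition ug : rel V := fun x y => a x y || a y x.

(* oriented 2-regular graph: underlying simple graph is 2-regular,
   i.e. a disjoint union of cycles (each of length >= 3) *)
Definition oriented_2regular : Prop :=
  oriented /\ forall x, #|[set y | ug x y]| = 2.

Definition ccomp (x : V) : {set V} := [set y | connect ug x y].

Definition step (S : {set V}) : {set V} := [set y | [exists x in S, a x y]].
Definition reachk (u : V) (k : nat) : {set V} := iter k step [set u].

Definition dist_eq (u v : V) (k : nat) : bool :=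
  (v \in reachk u k) && [forall j : 'I_k, v \notin reachk u j].

Definition distance_set (D : seq nat) : Prop :=
  D != [::] /\ forall d, d \in D -> exists u v, dist_eq u v d.

Definition ND (D : seq nat) (v : V) : {set V} :=
  [set y | has (dist_eq v y) D].

(* f : V -> {1,...,|V|} is a bijection *)
Definition labeling (f : V -> nat) : Prop :=
  injective f /\ forall x, 1 <= f x <= #|V|.

Definition weight (D : seq nat) (f : V -> nat) (v : V) : nat :=
  \sum_(y in ND D v) f y.

Definition D_antimagic_labeling (D : seq nat) (f : V -> nat) : Prop :=
  labeling f /\ injective (weight D f).

Definition D_antimagic (D : seq nat) : Prop :=
  exists f, D_antimagic_labeling D f.

(* every cycle component is unidirectional: its vertices can be listed
   cyclically as v_1..v_n so that its arcs are exactly (v_i, v_{i+1}) and (v_n, v_1) *)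
Definition unidirectional : Prop :=
  forall x, exists s : seq V,
    [/\ uniq s, (forall y, (y \in s) = (y \in ccomp x))
      & forall y z, y \in s -> a y z = (z == next s y)].

End OrientedGraphs.

From mathcomp Require Import all_boot zify.
Set Implicit Arguments. Unset Strict Implicit. Unset Printing Implicit Defensive.

(* For k >= 2, a vertex with no directed walk of length 2 has an empty
   k-neighbourhood, hence weight 0; so under a {k}-antimagic labelling there is
   at most one such vertex.  A sink is one; its two in-neighbours therefore start
   2-walks and have out-degree 2, while every other vertex has out-degree >= 1,
   contradicting the fact that the out-degrees sum to |V|.  Without sinks the
   same count forces every out-degree to be 1: the arcs are the graph of a
   permutation, i.e. every component is a unidirectional cycle.  Conversely, if
   the arcs are x -> succ x, then since k is below every cycle length the
   k-neighbourhood of v is {succ^k v}, so the weight of v under any bijective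
   labelling f is f (succ^k v), an injective function of v. *)

Lemma inj_iter (T : Type) (g : T -> T) n : injective g -> injective (iter n g).
Proof. by move=> g_inj; elim: n => //= n IH x y /g_inj/IH. Qed.

Lemma exists_succ (V : finType) (a : rel V) :
  (forall x, exists y, forall z, a x z = (z == y)) ->
  exists succ : V -> V, forall x y, a x y = (y == succ x).
Proof.
move=> out1; exists (fun x => odflt x [pick y | a x y]) => x z.
have [y arcE] := out1 x; rewrite arcE.
by case: pickP => [y'|/(_ y)] /=; rewrite arcE ?eqxx // => /eqP->.
Qed.

Section Walks.
Variables (V : finType) (a : rel V).

Definition has_walk2 (u : V) : bool := [exists y, a u y && [exists z, a y z]].

Lemma reachk_set0 u j : ~~ has_walk2 u -> 2 <= j -> reachk a u j = set0.
Proof.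
move=> /existsPn no2 /subnKC <-; rewrite /reachk addnC iterD.
have -> : iter 2 (step a) [set u] = set0.
  apply/setP => z; rewrite in_set0 inE; apply/existsP => -[y /andP[]].
  rewrite inE => /existsP[x /andP[]]; rewrite inE => /eqP-> auy ayz.
  by move: (no2 y); rewrite auy; case/existsP; exists z.
elim: (j - 2) => //= i ->; apply/setP => z; rewrite in_set0 inE.
by apply/existsP => -[x]; rewrite in_set0.
Qed.

Lemma weight_eq0 (f : V -> nat) u k :
  ~~ has_walk2 u -> 2 <= k -> weight a [:: k] f u = 0.
Proof.
move=> no2 k2; rewrite /weight big_pred0 // => y.
by rewrite inE /= orbF /dist_eq reachk_set0 // in_set0.
Qed.

End Walks.

Section Counting.
Variable V : finType.

Lemma card_lt_sum (F : V -> nat) t w1 w2 : uniq [:: t; w1; w2] ->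
  (forall x, x != t -> 0 < F x) -> 1 < F w1 -> 1 < F w2 -> #|V| < \sum_x F x.
Proof.
rewrite /= !inE negb_or andbT => /andP[/andP[tw1 tw2] w12] F_pos F1 F2.
have sum3 (G : V -> nat) : \sum_x G x =
    G t + G w1 + G w2 + \sum_(x | [&& x != t, x != w1 & x != w2]) G x.
  rewrite (bigD1 t) //= (bigD1 w1) /= 1?eq_sym //.
  rewrite (bigD1 w2) /=; last by rewrite ![w2 == _]eq_sym tw2 w12.
  by rewrite !addnA; congr (_ + _); apply: eq_bigl => x; rewrite andbA.
have rest : \sum_(x | [&& x != t, x != w1 & x != w2]) 1 <=
            \sum_(x | [&& x != t, x != w1 & x != w2]) F x.
  by apply: leq_sum => x /andP[/F_pos].
have -> : #|V| = \sum_(x : V) 1 by rewrite sum1_card.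
rewrite sum3 [X in _ < X]sum3; move: rest F1 F2; lia.
Qed.

Lemma sum_eq_card (F : V -> nat) :
  (forall x, 0 < F x) -> \sum_x F x = #|V| -> forall x, F x = 1.
Proof.
move=> F_pos sumF x; apply/eqP; rewrite eqn_leq F_pos andbT -subn_eq0.
have /eqP : \sum_x (F x - 1) = 0.
  apply/eqP; rewrite -(eqn_add2r #|V|) add0n -{1}sum1_card -big_split /= -sumF.
  by apply/eqP/eq_bigr => y _; rewrite subnK.
by rewrite sum_nat_eq0 => /forallP/(_ x).
Qed.

End Counting.

Section SuccessorDistance.
Variables (V : finType) (a : rel V) (succ : V -> V).
Hypothesis arcE : forall x y, a x y = (y == succ x).

Lemma reachk_iter u j : reachk a u j = [set iter j succ u].
Proof.
elim: j => [//|j IH]; rewrite /reachk iterS -/(reachk a u j) IH.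
apply/setP => z; rewrite !inE; apply/existsP/eqP => [[x]|->].
  by rewrite inE arcE => /andP[/eqP-> /eqP].
by exists (iter j succ u); rewrite inE eqxx arcE /=.
Qed.

Lemma dist_eq_iter u y k :
  k < order succ u -> dist_eq a u y k = (y == iter k succ u).
Proof.
move=> k_lt; rewrite /dist_eq reachk_iter inE.
have [-> /=|//] := eqP; apply/forallP => j; rewrite reachk_iter inE.
apply/eqP => /(congr1 (findex succ u)).
by rewrite !findex_iter // => [/eqP|]; [rewrite gtn_eqF | exact: ltn_trans k_lt].
Qed.

Lemma ND_iter v k : k < order succ v -> ND a [:: k] v = [set iter k succ v].
Proof. by move=> k_lt; apply/setP => y; rewrite !inE /= orbF dist_eq_iter. Qed.

End SuccessorDistance.

Section TwoRegular.
Variables (V : finType) (a : rel V).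
Hypothesis a2reg : oriented_2regular a.

Definition outdeg (x : V) : nat := #|[set y | a x y]|.
Definition indeg (x : V) : nat := #|[set y | a y x]|.

Lemma outdeg_add_indeg x : outdeg x + indeg x = 2.
Proof.
have [[_ asym] ug2] := a2reg; rewrite -(ug2 x) /outdeg /indeg.
have -> : [set y | ug a x y] = [set y | a x y] :|: [set y | a y x].
  by apply/setP => y; rewrite !inE.
rewrite cardsU (_ : _ :&: _ = set0) ?cards0 ?subn0 //.
apply/setP => y; rewrite !inE; apply/andP => -[axy].
exact/negP/asym.
Qed.

Lemma sum_outdeg : \sum_x outdeg x = #|V|.
Proof.
have card_sum (P : rel V) x : #|[set y | P x y]| = \sum_y (P x y : nat).
  by rewrite -sum1dep_card big_mkcond; apply: eq_bigr => y _; case: (P x y).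
have sum_in : \sum_x indeg x = \sum_x outdeg x.
  rewrite (eq_bigr _ (fun x _ => card_sum (fun x y => a y x) x)) exchange_big.
  by apply: eq_bigr => x _; rewrite /outdeg card_sum.
have : \sum_x outdeg x + \sum_x indeg x = #|V| * 2.
  by rewrite -big_split -sum_nat_const; apply: eq_bigr => x _; exact: outdeg_add_indeg.
by rewrite sum_in; lia.
Qed.

Lemma outdeg_gt0 x y : a x y -> 0 < outdeg x.
Proof. by move=> axy; apply/card_gt0P; exists y; rewrite inE. Qed.

Lemma outdeg_eq2 x y z : y != z -> a x y -> a x z -> outdeg x = 2.
Proof.
move=> yz axy axz; have := outdeg_add_indeg x.
have : #|[set y; z]| <= outdeg x.
  by apply/subset_leq_card/subsetP => w; rewrite !inE => /orP[]/eqP->.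
rewrite cards2 yz; lia.
Qed.

Section Successor.
Variable succ : V -> V.
Hypothesis arcE : forall x y, a x y = (y == succ x).

Lemma succ_inj : injective succ.
Proof.
move=> y z succ_yz; apply/eqP/negPn/negP => yz.
have : #|[set y; z]| <= indeg (succ y).
  apply/subset_leq_card/subsetP => w.
  by rewrite !inE arcE => /orP[]/eqP->; rewrite ?succ_yz.
have out1 : 0 < outdeg (succ y) by apply: (outdeg_gt0 (y := succ (succ y))); rewrite arcE.
by have := outdeg_add_indeg (succ y); rewrite cards2 yz; lia.
Qed.

Lemma ccomp_orbit x : ccomp a x =i orbit succ x.
Proof.
move=> y; rewrite inE -fconnect_orbit; apply/idP/idP; apply: connect_sub => u v.
  rewrite /ug !arcE => /orP[]/eqP->; first exact: fconnect1.
  by rewrite fconnect_sym ?fconnect1 //; exact: succ_inj.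
by move=> /eqP<-; apply: connect1; rewrite /ug arcE eqxx.
Qed.

Lemma card_ccomp x : #|ccomp a x| = order succ x.
Proof. by apply: eq_card => y; rewrite ccomp_orbit -fconnect_orbit. Qed.

Lemma unidirectional_succ : unidirectional a.
Proof.
move=> x; exists (orbit succ x); split; first exact: orbit_uniq.
  by move=> y; rewrite ccomp_orbit.
have cyc : fcycle succ (orbit succ x).
  by apply/injectivePcycle => u v _ _; exact: succ_inj.
by move=> y z y_orb; rewrite arcE (eqP (next_cycle cyc y_orb)).
Qed.

End Successor.

Lemma unidirectionalP :
  unidirectional a <-> exists succ, forall x y, a x y = (y == succ x).
Proof.
split=> [unid|[succ arcE]]; last exact: unidirectional_succ arcE.
apply: exists_succ => x; have [s [_ s_comp s_next]] := unid x.
by exists (next s x) => z; rewrite s_next // s_comp inE connect0.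
Qed.

Lemma antimagic_of_succ (succ : V -> V) k :
  (forall x y, a x y = (y == succ x)) -> (forall x, k < #|ccomp a x|) ->
  D_antimagic a [:: k].
Proof.
move=> arcE k_lt; exists (fun x => (enum_rank x).+1); split; first split.
- by move=> x y [] /val_inj/enum_rank_inj.
- by move=> x /=; rewrite ltn_ord.
move=> u v; rewrite /weight !(ND_iter arcE) -?(card_ccomp arcE) // !big_set1.
by case=> /val_inj/enum_rank_inj/(inj_iter (succ_inj arcE)).
Qed.

Section Antimagic.
Variables (k : nat) (f : V -> nat).
Hypotheses (k_ge2 : 2 <= k) (weight_inj : injective (weight a [:: k] f)).

Lemma has_walk2_other u v : ~~ has_walk2 a u -> u != v -> has_walk2 a v.
Proof.
move=> no2u; apply: contraNT => no2v.
by apply/eqP/weight_inj; rewrite !weight_eq0.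
Qed.

Lemma outdeg_pos x : 0 < outdeg x.
Proof.
have [[irr _] ug2] := a2reg.
rewrite lt0n; apply/negP => /eqP/cards0_eq/setP sink_x.
have no_arc y : ~~ a x y by have := sink_x y; rewrite !inE => ->.
have no2 : ~~ has_walk2 a x by apply/existsPn => y; rewrite (negbTE (no_arc y)).
have out2 w : w \in [set y | ug a x y] -> (w != x) && (1 < outdeg w).
  rewrite inE /ug (negbTE (no_arc w)) /= => awx.
  have xw : x != w by apply: contraTneq awx => <-; rewrite irr.
  case/existsP: (has_walk2_other no2 xw) => y /andP[awy /existsP[z ayz]].
  have xy : x != y by apply: contraTneq ayz => <-; rewrite no_arc.
  by rewrite eq_sym xw (outdeg_eq2 xy awx awy).
have /cards2P [w1 [w2 [w12 nbr_x]]] := introT eqP (ug2 x).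
have /andP[w1x out_w1] : (w1 != x) && (1 < outdeg w1).
  by apply: out2; rewrite nbr_x !inE eqxx.
have /andP[w2x out_w2] : (w2 != x) && (1 < outdeg w2).
  by apply: out2; rewrite nbr_x !inE eqxx orbT.
have pos_other y : y != x -> 0 < outdeg y.
  by rewrite eq_sym => /(has_walk2_other no2)/existsP[z /andP[/outdeg_gt0]].
have uniq3 : uniq [:: x; w1; w2] by rewrite /= !inE negb_or ![x == _]eq_sym w1x w2x w12.
by have := card_lt_sum uniq3 pos_other out_w1 out_w2; rewrite sum_outdeg ltnn.
Qed.

Lemma outdeg_eq1 x : outdeg x = 1.
Proof. exact: sum_eq_card outdeg_pos sum_outdeg x. Qed.

Lemma succ_of_antimagic : exists succ, forall x y, a x y = (y == succ x).
Proof.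
apply: exists_succ => x; have /eqP/cards1P[y out_x] := outdeg_eq1 x.
by exists y => z; rewrite -in_set1 -out_x inE.
Qed.

End Antimagic.

End TwoRegular.

Theorem mainTheorem18 (V : finType) (a : rel V) (k : nat) :
  oriented_2regular a ->
  (exists x y : V, y \notin ccomp a x) ->
  2 <= k ->
  (forall x : V, k <= #|ccomp a x| - 1) ->
  distance_set a [:: k] ->
  (D_antimagic a [:: k] <-> unidirectional a).
Proof.
move=> a2reg _ k_ge2 k_le _; rewrite (unidirectionalP a2reg); split.
  by case=> f [_ weight_inj]; exact: (succ_of_antimagic a2reg k_ge2 weight_inj).
case=> succ arcE; apply: (antimagic_of_succ a2reg arcE) => x.
by have := k_le x; lia.
Qed.
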